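(* Let $G=(V,E)$ be a finite simple undirected graph of bounded growth with maximum degree $\Delta$ and neighborhood independence bounded by a constant $c$, and let $R$ be an integer with $1\le R<\Delta$. Run the procedure Extended-VM on $G$ with parameter $R$. Then each vertex $v\in V$ can select at least $\deg(v)-O(\Delta c/R)$ neighbors that are not active when $v$ is active, i.e. $v$ has at least $\deg(v)-O(\Delta c/R)$ neighbors outside its own super-class.
   Context: The neighborhood independence of $G$ is the maximum over $v$ of the size of an independent set contained in the neighbor set $\Gamma(v)$; $\deg(v)=|\Gamma(v)|$. $G$ has bounded growth if for every $r$ the number of pairwise independent vertices within distance $r$ of any vertex is bounded by a function of $r$ alone. Procedure Extended-VM$(G,R)$: compute a proper $(\Delta+1)$-coloring of $G$; partition the colors into $R$ super-classes, each consisting of $O(\Delta/R)$ colors (each vertex belongs to the super-class of its color); then perform $R$ phases in round-robin order, one per super-class $S$; in the phase of $S$, the vertices of $S$ are active, and each active vertex $v$ selects all its neighbors not in $S$, divides its backup data equally among them, and sends the parts to them. *)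

From mathcomp Require Import all_boot all_order.
Set Implicit Arguments. Unset Strict Implicit. Unset Printing Implicit Defensive.

Section Graph.
Variables (T : finType) (e : rel T).

Definition simple_graph : Prop := symmetric e /\ irreflexive e.

Definition nbhd (v : T) : {set T} := [set u | e v u].
Definition deg (v : T) : nat := #|nbhd v|.
Definition max_deg : nat := \max_(v : T) deg v.

Definition independent (I : {set T}) : Prop :=
  forall x y, x \in I -> y \in I -> ~~ e x y.

Definition nbhd_indep_le (c : nat) : Prop :=
  forall v (I : {set T}), I \subset nbhd v -> independent I -> #|I| <= c.

Fixpoint ball (v : T) (r : nat) : {set T} :=
  match r with
  | 0 => [set v]
  | r'.+1 => ball v r' :|: [set u | [exists w in ball v r', e w u]]
  end.

Definition bounded_growth (f : nat -> nat) : Prop :=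
  forall r v (I : {set T}), I \subset ball v r -> independent I -> #|I| <= f r.

Definition proper_coloring k (col : T -> 'I_k) : Prop :=
  forall u v, e u v -> col u != col v.

End Graph.

From mathcomp Require Import all_boot all_order.
Set Implicit Arguments. Unset Strict Implicit. Unset Printing Implicit Defensive.

(* A color class inside Gamma(v) is independent, so Gamma(v) meets each color
   in at most c vertices.  The neighbors of v in v's own super-class therefore
   number at most c times the O(Delta/R) colors of that super-class; all other
   neighbors lie outside it. *)

Section ColorClassesInNeighborhood.
Variables (T : finType) (e : rel T) (c : nat) (I : finType) (col : T -> I).
Hypothesis nbhd_indep : nbhd_indep_le e c.
Hypothesis col_proper : forall u w, e u w -> col u != col w.

Lemma color_class_independent (A : {set T}) (k : I) :
  independent e [set u in A | col u == k].
Proof.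
move=> x y; rewrite !inE => /andP[_ /eqP colx] /andP[_ /eqP coly].
by apply/negP => /col_proper; rewrite colx coly eqxx.
Qed.

Lemma card_nbhd_subset_colors (v : T) (A : {set T}) (S : {pred I}) :
  A \subset nbhd e v -> {in A, forall u, col u \in S} -> #|A| <= c * #|S|.
Proof.
move=> subA colA.
rewrite -sum1_card (partition_big col (mem S)) //= mulnC -sum_nat_const.
apply: leq_sum => k _; rewrite sum1_card.
rewrite (eq_card (B := [set u in A | col u == k])); last by move=> u; rewrite inE.
apply: (nbhd_indep _ (color_class_independent (A := A) (k := k))).
by apply: subset_trans subA; apply/subsetP => u; rewrite inE => /andP[].
Qed.

End ColorClassesInNeighborhood.

Lemma deg_split (T : finType) (e : rel T) (v : T) (P : {pred T}) :
  deg e v = #|[set u in nbhd e v | ~~ P u]| + #|[set u in nbhd e v | P u]|.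
Proof.
rewrite /deg -(cardsID [set u | P u] (nbhd e v)) addnC.
by congr (_ + _); apply: eq_card => u; rewrite !inE andbC.
Qed.

Theorem lemma4 :
  forall K : nat, exists C : nat,
  forall (T : finType) (e : rel T) (f : nat -> nat) (c R : nat)
         (col : T -> 'I_(max_deg e).+1) (sc : 'I_(max_deg e).+1 -> 'I_R),
  simple_graph e ->
  bounded_growth e f ->
  nbhd_indep_le e c ->
  1 <= R -> R < max_deg e ->
  proper_coloring e col ->
  (forall s : 'I_R, R * #|[set k | sc k == s]| <= K * max_deg e) ->
  forall v : T,
    R * deg e v <=
    R * #|[set u in nbhd e v | sc (col u) != sc (col v)]| + C * max_deg e * c.
Proof.
move=> K; exists K => T e f c R col sc _ _ nbhd_indep _ _ col_proper sc_small v.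
set s := sc (col v).
rewrite (@deg_split _ e v (fun u => sc (col u) == s)) mulnDr leq_add2l.
have same_class_small :
    #|[set u in nbhd e v | sc (col u) == s]| <= c * #|[set k | sc k == s]|.
  apply: (card_nbhd_subset_colors nbhd_indep col_proper (v := v)).
    by apply/subsetP => u; rewrite inE => /andP[].
  by move=> u; rewrite !inE => /andP[].
apply: leq_trans (leq_mul (leqnn R) same_class_small) _.
by rewrite mulnCA [K * _ * c]mulnC leq_mul2l sc_small orbT.
Qed.
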